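(* If $f:\mathbb{R}\to\mathbb{R}_{>0}$ is very rapidly decreasing and $g:\mathbb{R}\to\mathbb{R}_{>0}$ is a positive, bounded, continuous function, then $fg$ is very rapidly decreasing.
   Context: A positive function $f:\mathbb{R}\to\mathbb{R}_{>0}$ is called very rapidly decreasing (VRD) if every smooth compactly supported function $h:\mathbb{R}\to\mathbb{R}$ is a uniform limit on $\mathbb{R}$ of functions of the form $f(x)P(x)$ with $P$ a real polynomial. *)

From Stdlib Require Import Reals List.
Open Scope R_scope.

(* Evaluation of a real polynomial given by its coefficient list
   [a0; a1; ...; an], i.e. a0 + a1 x + ... + an x^n (Horner). *)
Fixpoint poly_eval (p : list R) (x : R) : R :=
  match p with
  | nil => 0
  | a :: q => a + x * poly_eval q x
  end.

Definition smooth (h : R -> R) : Prop :=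
  exists D : nat -> R -> R,
    D 0%nat = h /\
    forall (n : nat) (x : R), derivable_pt_lim (D n) x (D (S n) x).

Definition compact_support (h : R -> R) : Prop :=
  exists M : R, forall x : R, M < Rabs x -> h x = 0.

Definition VRD (f : R -> R) : Prop :=
  (forall x : R, 0 < f x) /\
  forall h : R -> R, smooth h -> compact_support h ->
    forall eps : R, 0 < eps ->
      exists P : list R, forall x : R, Rabs (h x - f x * poly_eval P x) <= eps.

(* Let h be smooth with support in [-M, M] and eps > 0.  Since g
   is continuous and positive, 1/g is continuous on [-M, M], so by the
   Weierstrass approximation theorem there is a polynomial Q with 1/g close
   to Q on [-M, M]; hence h is uniformly close to g (h Q) on all of R.  The
   function h Q is again smooth with compact support, so, f being VRD, h Q
   is uniformly close to f P for some polynomial P, and since g is bounded,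
   g (h Q) is uniformly close to f g P. *)

From Stdlib Require Import Reals Lra Lia List FunctionalExtensionality.
Open Scope R_scope.

Fixpoint padd (p q : list R) : list R :=
  match p, q with
  | nil, _ => q
  | _, nil => p
  | a :: p', b :: q' => (a + b) :: padd p' q'
  end.

Lemma padd_eval p q x : poly_eval (padd p q) x = poly_eval p x + poly_eval q x.
Proof.
  revert q; induction p as [|a p IH]; intros [|b q]; simpl; try ring.
  rewrite IH; ring.
Qed.

Definition pscal (c : R) (p : list R) : list R := map (Rmult c) p.

Lemma pscal_eval c p x : poly_eval (pscal c p) x = c * poly_eval p x.
Proof. induction p as [|a p IH]; simpl; [ring | rewrite IH; ring]. Qed.

Fixpoint pmul (p q : list R) : list R :=
  match p with
  | nil => nil
  | a :: p' => padd (pscal a q) (0 :: pmul p' q)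
  end.

Lemma pmul_eval p q x : poly_eval (pmul p q) x = poly_eval p x * poly_eval q x.
Proof.
  induction p as [|a p IH]; simpl; [ring|].
  rewrite padd_eval, pscal_eval; simpl; rewrite IH; ring.
Qed.

Definition is_poly (F : R -> R) : Prop :=
  exists P : list R, forall x, F x = poly_eval P x.

Lemma is_poly_const c : is_poly (fun _ => c).
Proof. exists (c :: nil); intros; simpl; ring. Qed.

Lemma is_poly_id : is_poly (fun x => x).
Proof. exists (0 :: 1 :: nil); intros; simpl; ring. Qed.

Lemma is_poly_plus F G : is_poly F -> is_poly G -> is_poly (fun x => F x + G x).
Proof.
  intros [P HP] [Q HQ]; exists (padd P Q); intros x.
  rewrite padd_eval, HP, HQ; reflexivity.
Qed.

Lemma is_poly_mult F G : is_poly F -> is_poly G -> is_poly (fun x => F x * G x).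
Proof.
  intros [P HP] [Q HQ]; exists (pmul P Q); intros x.
  rewrite pmul_eval, HP, HQ; reflexivity.
Qed.

Lemma is_poly_comp F G : is_poly F -> is_poly G -> is_poly (fun x => F (G x)).
Proof.
  intros [P HP] HG.
  assert (HPG : is_poly (fun x => poly_eval P (G x))).
  { clear HP; induction P as [|a P IH]; simpl.
    - apply is_poly_const.
    - apply is_poly_plus; [apply is_poly_const | apply is_poly_mult; [exact HG | exact IH]]. }
  destruct HPG as [Q HQ]; exists Q; intros x; rewrite HP; apply HQ.
Qed.

Lemma smooth_zero : smooth (fun _ => 0).
Proof.
  exists (fun _ _ => 0); split; [reflexivity|].
  intros n x; apply (derivable_pt_lim_const 0 x).
Qed.

Lemma smooth_plus h1 h2 : smooth h1 -> smooth h2 -> smooth (fun x => h1 x + h2 x).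
Proof.
  intros [D1 [<- H1]] [D2 [<- H2]].
  exists (fun n x => D1 n x + D2 n x); split; [reflexivity|].
  intros n x; apply (derivable_pt_lim_plus (D1 n) (D2 n)); auto.
Qed.

Lemma smooth_scal c h : smooth h -> smooth (fun x => c * h x).
Proof.
  intros [D [<- H]].
  exists (fun n x => c * D n x); split; [reflexivity|].
  intros n x; apply (derivable_pt_lim_scal (D n)); auto.
Qed.

(* Leibniz rule: the n-th derivative of x h(x) is x h^(n)(x) + n h^(n-1)(x). *)
Lemma smooth_xmul h : smooth h -> smooth (fun x => x * h x).
Proof.
  intros [D [<- H]].
  exists (fun n x => x * D n x + INR n * D (Nat.pred n) x); split.
  - apply functional_extensionality; intro x; simpl; ring.
  - intros n x.
    set (d := match n with O => D 1%nat x | S _ => D n x end).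
    assert (Hpred : derivable_pt_lim (D (Nat.pred n)) x d)
      by (unfold d; destruct n; simpl; auto).
    pose proof (derivable_pt_lim_plus _ _ x _ _
       (derivable_pt_lim_mult id (D n) x _ _ (derivable_pt_lim_id x) (H n x))
       (derivable_pt_lim_scal _ (INR n) x _ Hpred)) as K.
    unfold plus_fct, mult_fct, mult_real_fct, id in K.
    replace (x * D (S n) x + INR (S n) * D (Nat.pred (S n)) x)
      with (1 * D n x + x * D (S n) x + INR n * d); [exact K|].
    unfold d; rewrite S_INR; destruct n; simpl; ring.
Qed.

Lemma smooth_mul_poly h P : smooth h -> smooth (fun x => h x * poly_eval P x).
Proof.
  intros Hh; induction P as [|a P IH]; simpl.
  - replace (fun x => h x * 0) with (fun _ : R => 0)
      by (apply functional_extensionality; intro; ring).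
    apply smooth_zero.
  - replace (fun x => h x * (a + x * poly_eval P x))
      with (fun x => a * h x + x * (h x * poly_eval P x))
      by (apply functional_extensionality; intro; ring).
    apply smooth_plus; [apply smooth_scal | apply smooth_xmul]; auto.
Qed.

(* binom_mean n t phi is the expectation of phi(K) for K ~ Binomial(n, t),
   i.e. sum_k C(n,k) t^k (1-t)^(n-k) phi(k); the recursion conditions on the
   outcome of the first of the n trials. *)
Fixpoint binom_mean (n : nat) (t : R) (phi : nat -> R) : R :=
  match n with
  | O => phi O
  | S n => t * binom_mean n t (fun k => phi (S k)) + (1 - t) * binom_mean n t phi
  end.

Lemma binom_mean_ext n t phi psi :
  (forall k, phi k = psi k) -> binom_mean n t phi = binom_mean n t psi.
Proof.
  revert phi psi; induction n as [|n IH]; intros phi psi H; simpl; auto.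
  rewrite (IH (fun k => phi (S k)) (fun k => psi (S k))), (IH phi psi); auto.
Qed.

Lemma binom_mean_add n t phi psi :
  binom_mean n t (fun k => phi k + psi k) = binom_mean n t phi + binom_mean n t psi.
Proof.
  revert phi psi; induction n as [|n IH]; intros phi psi; simpl; auto.
  rewrite (IH (fun k => phi (S k)) (fun k => psi (S k))), (IH phi psi); ring.
Qed.

Lemma binom_mean_scal n t c phi :
  binom_mean n t (fun k => c * phi k) = c * binom_mean n t phi.
Proof.
  revert phi; induction n as [|n IH]; intros phi; simpl; auto.
  rewrite (IH (fun k => phi (S k))), (IH phi); ring.
Qed.

Lemma binom_mean_const n t c : binom_mean n t (fun _ => c) = c.
Proof. induction n as [|n IH]; simpl; auto. rewrite IH; ring. Qed.

(* For t in [0,1] the weights are nonnegative, so the mean is monotone. *)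
Lemma binom_mean_mono n t phi psi : 0 <= t <= 1 ->
  (forall k, (k <= n)%nat -> phi k <= psi k) ->
  binom_mean n t phi <= binom_mean n t psi.
Proof.
  revert phi psi; induction n as [|n IH]; intros phi psi Ht H; simpl.
  - apply H; lia.
  - assert (binom_mean n t (fun k => phi (S k)) <= binom_mean n t (fun k => psi (S k)))
      by (apply IH; auto; intros; apply H; lia).
    assert (binom_mean n t phi <= binom_mean n t psi)
      by (apply IH; auto; intros; apply H; lia).
    apply Rplus_le_compat; apply Rmult_le_compat_l; lra.
Qed.

Lemma binom_mean_abs n t phi : 0 <= t <= 1 ->
  Rabs (binom_mean n t phi) <= binom_mean n t (fun k => Rabs (phi k)).
Proof.
  intros Ht; apply Rabs_le; split.
  - replace (- binom_mean n t (fun k => Rabs (phi k)))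
      with (binom_mean n t (fun k => -1 * Rabs (phi k)))
      by (rewrite binom_mean_scal; ring).
    apply binom_mean_mono; auto; intros k _.
    pose proof (Rle_abs (- phi k)); rewrite Rabs_Ropp in *; lra.
  - apply binom_mean_mono; auto; intros; apply Rle_abs.
Qed.

Lemma binom_mean_id n t : binom_mean n t INR = INR n * t.
Proof.
  induction n as [|n IH]; [simpl; ring|]; cbn [binom_mean].
  rewrite (binom_mean_ext n t (fun k => INR (S k)) (fun k => INR k + 1))
    by (intros; apply S_INR).
  rewrite binom_mean_add, binom_mean_const, IH, S_INR; ring.
Qed.

Lemma binom_mean_sq n t :
  binom_mean n t (fun k => INR k * INR k) = INR n * t + INR n * (INR n - 1) * t * t.
Proof.
  induction n as [|n IH]; [simpl; ring|]; cbn [binom_mean].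
  rewrite (binom_mean_ext n t (fun k => INR (S k) * INR (S k))
             (fun k => INR k * INR k + 2 * INR k + 1))
    by (intros; rewrite S_INR; ring).
  rewrite !binom_mean_add, binom_mean_scal, binom_mean_const, IH, binom_mean_id, S_INR.
  ring.
Qed.

Lemma binom_mean_variance n t : (1 <= n)%nat ->
  binom_mean n t (fun k => (t - INR k / INR n) * (t - INR k / INR n))
  = t * (1 - t) / INR n.
Proof.
  intros Hn; assert (Hn0 : 0 < INR n) by (apply lt_0_INR; lia).
  rewrite (binom_mean_ext n t _
    (fun k => t * t + ((-2 * t / INR n) * INR k + / (INR n * INR n) * (INR k * INR k))))
    by (intros; field; lra).
  rewrite !binom_mean_add, binom_mean_const, !binom_mean_scal, binom_mean_id, binom_mean_sq.
  field; lra.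
Qed.

Lemma binom_mean_poly n phi : is_poly (fun t => binom_mean n t phi).
Proof.
  revert phi; induction n as [|n IH]; intros phi; simpl.
  - apply is_poly_const.
  - apply is_poly_plus; apply is_poly_mult; auto; [apply is_poly_id|].
    apply is_poly_plus; [apply is_poly_const|].
    destruct (is_poly_mult _ _ (is_poly_const (-1)) is_poly_id) as [P HP].
    exists P; intros x; rewrite <- HP; ring.
Qed.

Definition quad_modulus (F : R -> R) (a b eta C : R) : Prop :=
  forall x y, a <= x <= b -> a <= y <= b ->
    Rabs (F x - F y) <= eta + C * ((x - y) * (x - y)).

Lemma bernstein_estimate F eta C n t :
  0 <= C -> (1 <= n)%nat -> 0 <= t <= 1 -> quad_modulus F 0 1 eta C ->
  Rabs (F t - binom_mean n t (fun k => F (INR k / INR n))) <= eta + C / INR n.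
Proof.
  intros HC Hn Ht HF.
  assert (Hn0 : 0 < INR n) by (apply lt_0_INR; lia).
  replace (F t - binom_mean n t (fun k => F (INR k / INR n)))
    with (binom_mean n t (fun k => F t - F (INR k / INR n)))
    by (unfold Rminus; rewrite binom_mean_add,
          (binom_mean_ext n t (fun k => - _) (fun k => -1 * F (INR k / INR n)))
          by (intros; ring);
        rewrite binom_mean_scal, binom_mean_const; ring).
  eapply Rle_trans; [apply binom_mean_abs; auto|].
  eapply Rle_trans.
  { apply (binom_mean_mono n t _
      (fun k => eta + C * ((t - INR k / INR n) * (t - INR k / INR n)))); auto.
    intros k Hk; apply HF; auto; split.
    - apply Rmult_le_pos; [apply pos_INR | left; apply Rinv_0_lt_compat; exact Hn0].
    - apply le_INR in Hk; apply Rmult_le_reg_r with (INR n); auto.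
      unfold Rdiv; rewrite Rmult_assoc, Rinv_l; lra. }
  rewrite binom_mean_add, binom_mean_const, binom_mean_scal, binom_mean_variance by auto.
  apply Rplus_le_compat_l; unfold Rdiv; rewrite <- Rmult_assoc.
  apply Rmult_le_compat_r; [left; apply Rinv_0_lt_compat; auto | nra].
Qed.

(* A function continuous on [a, b] admits, for every tolerance eta > 0, a
   quadratic modulus (eta, C): points closer than the uniform-continuity
   radius delta differ by less than eta, and farther points differ by at
   most 2 sup|F| <= (2 sup|F| / delta^2) (x - y)^2. *)
Lemma continuous_quad_modulus F a b : a <= b ->
  (forall x, a <= x <= b -> continuity_pt F x) ->
  forall eta, 0 < eta -> exists C, 0 <= C /\ quad_modulus F a b eta C.
Proof.
  intros Hab HF eta Heta.
  destruct (Heine_cor2 HF (mkposreal eta Heta)) as [[delta Hdelta] Hunif].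
  simpl in Hunif.
  destruct (continuity_ab_maj (fun x => Rabs (F x)) a b Hab) as [xK [HK _]].
  { intros c Hc; apply (continuity_pt_comp F Rabs); [auto | apply Rcontinuity_abs]. }
  set (K := Rabs (F xK)).
  assert (HK0 : 0 <= K) by apply Rabs_pos.
  exists (2 * K / (delta * delta)); split.
  { apply Rmult_le_pos; [lra | left; apply Rinv_0_lt_compat; nra]. }
  intros x y Hx Hy.
  assert (Hsq : 0 <= (x - y) * (x - y)) by apply Rle_0_sqr.
  destruct (Rlt_dec (Rabs (x - y)) delta) as [Hnear | Hfar].
  - pose proof (Hunif x y Hx Hy Hnear).
    assert (0 <= 2 * K / (delta * delta) * ((x - y) * (x - y))).
    { apply Rmult_le_pos; auto; apply Rmult_le_pos; [lra | left; apply Rinv_0_lt_compat; nra]. }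
    lra.
  - assert (Hratio : 1 <= (x - y) * (x - y) / (delta * delta)).
    { apply Rnot_lt_le in Hfar.
      assert (delta * delta <= (x - y) * (x - y)).
      { rewrite <- (Rabs_right delta) in Hfar by lra.
        apply Rsqr_le_abs_1 in Hfar; unfold Rsqr in Hfar; exact Hfar. }
      apply Rmult_le_reg_r with (delta * delta); [nra|].
      unfold Rdiv; rewrite Rmult_assoc, Rinv_l; nra. }
    assert (Rabs (F x - F y) <= 2 * K).
    { unfold Rminus; eapply Rle_trans; [apply Rabs_triang|].
      rewrite Rabs_Ropp; pose proof (HK x Hx) as HKx; pose proof (HK y Hy) as HKy.
      cbv beta in HKx, HKy; fold K in HKx, HKy; lra. }
    replace (2 * K / (delta * delta) * ((x - y) * (x - y)))
      with (2 * K * ((x - y) * (x - y) / (delta * delta))) by (field; lra).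
    nra.
Qed.

Lemma bernstein_approx F :
  (forall eta, 0 < eta -> exists C, 0 <= C /\ quad_modulus F 0 1 eta C) ->
  forall eps, 0 < eps ->
  exists Q, forall t, 0 <= t <= 1 -> Rabs (F t - poly_eval Q t) <= eps.
Proof.
  intros HF eps Heps.
  destruct (HF (eps / 2)) as [C [HC Hmod]]; [lra|].
  destruct (archimed_cor1 (eps / (2 * (C + 1)))) as [n [Hn Hn1]].
  { apply Rdiv_lt_0_compat; lra. }
  assert (Hn0 : 0 < INR n) by (apply lt_0_INR; lia).
  assert (HCn : C / INR n <= eps / 2).
  { apply Rle_trans with ((C + 1) * / INR n).
    - apply Rmult_le_compat_r; [left; apply Rinv_0_lt_compat|]; lra.
    - apply Rmult_lt_compat_l with (r := C + 1) in Hn; [|lra].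
      replace ((C + 1) * (eps / (2 * (C + 1)))) with (eps / 2) in Hn by (field; lra).
      lra. }
  destruct (binom_mean_poly n (fun k => F (INR k / INR n))) as [Q HQ].
  exists Q; intros t Ht; rewrite <- HQ.
  pose proof (bernstein_estimate F (eps / 2) C n t HC ltac:(lia) Ht Hmod); lra.
Qed.

(* Weierstrass approximation theorem on a compact interval [a, b], obtained
   from Bernstein's theorem through the affine change of variable
   x = a + (b - a) s. *)
Lemma weierstrass F a b : a < b ->
  (forall x, a <= x <= b -> continuity_pt F x) ->
  forall eps, 0 < eps ->
  exists Q, forall x, a <= x <= b -> Rabs (F x - poly_eval Q x) <= eps.
Proof.
  intros Hab HF eps Heps.
  set (G := fun s => F (a + (b - a) * s)).
  assert (HG : forall eta, 0 < eta -> exists C, 0 <= C /\ quad_modulus G 0 1 eta C).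
  { intros eta Heta.
    destruct (continuous_quad_modulus F a b (Rlt_le _ _ Hab) HF eta Heta) as [C [HC Hmod]].
    exists (C * ((b - a) * (b - a))); split; [apply Rmult_le_pos; [exact HC | apply Rle_0_sqr]|].
    intros s s' Hs Hs'; unfold G.
    replace (C * ((b - a) * (b - a)) * ((s - s') * (s - s')))
      with (C * ((a + (b - a) * s - (a + (b - a) * s')) * (a + (b - a) * s - (a + (b - a) * s'))))
      by ring.
    apply Hmod; nra. }
  destruct (bernstein_approx G HG eps Heps) as [Q0 HQ0].
  assert (Haffine : is_poly (fun x => (x - a) / (b - a))).
  { destruct (is_poly_mult _ _ (is_poly_plus _ _ is_poly_id (is_poly_const (- a)))
                (is_poly_const (/ (b - a)))) as [P HP].
    exists P; intros x; rewrite <- HP; reflexivity. }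
  destruct (is_poly_comp (poly_eval Q0) _ (ex_intro _ Q0 (fun _ => eq_refl)) Haffine)
    as [Q HQ].
  exists Q; intros x Hx; rewrite <- HQ.
  assert (Hs : 0 <= (x - a) / (b - a) <= 1).
  { split; apply Rmult_le_reg_r with (b - a); unfold Rdiv; try rewrite Rmult_assoc, Rinv_l;
      lra. }
  replace (F x) with (G ((x - a) / (b - a))) by (unfold G; f_equal; field; lra).
  apply HQ0; exact Hs.
Qed.

Lemma smooth_continuous h : smooth h -> continuity h.
Proof.
  intros [D [<- HD]] x; apply derivable_continuous_pt.
  exists (D 1%nat x); apply HD.
Qed.

Lemma compact_support_radius h : compact_support h ->
  exists M, 0 < M /\ forall x, M < Rabs x -> h x = 0.
Proof.
  intros [M0 HM0]; exists (Rabs M0 + 1); split.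
  - pose proof (Rabs_pos M0); lra.
  - intros x Hx; apply HM0; pose proof (Rle_abs M0); lra.
Qed.

Lemma compact_support_mul_poly h P :
  compact_support h -> compact_support (fun x => h x * poly_eval P x).
Proof. intros [M HM]; exists M; intros x Hx; rewrite HM by exact Hx; ring. Qed.

Lemma compact_support_bounded h : continuity h -> compact_support h ->
  exists K, forall x, Rabs (h x) <= K.
Proof.
  intros Hc Hs; destruct (compact_support_radius h Hs) as [M [HM Hout]].
  destruct (continuity_ab_maj (fun x => Rabs (h x)) (- M) M) as [xK [HK _]]; [lra| |].
  { intros c _; apply (continuity_pt_comp h Rabs); [apply Hc | apply Rcontinuity_abs]. }
  exists (Rabs (h xK)); intros x.
  destruct (Rle_dec (Rabs x) M) as [Hin | Hfar].
  - apply HK; pose proof (Rle_abs x); pose proof (Rle_abs (- x)); rewrite Rabs_Ropp in *; lra.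
  - rewrite Hout, Rabs_R0 by lra; apply Rabs_pos.
Qed.

(* Key step: on the support of h, 1/g is uniformly approximated by a
   polynomial Q (Weierstrass), so h is uniformly close to g * (h * Q). *)
Lemma inverse_weight_approx g h B :
  (forall x, 0 < g x) -> (forall x, g x <= B) -> continuity g ->
  continuity h -> compact_support h ->
  forall eps, 0 < eps ->
  exists Q, forall x, Rabs (h x - g x * (h x * poly_eval Q x)) <= eps.
Proof.
  intros Hg HgB Hgc Hhc Hhs eps Heps.
  destruct (compact_support_radius h Hhs) as [M [HM Hout]].
  destruct (compact_support_bounded h Hhc Hhs) as [K HK].
  assert (HK0 : 0 <= K) by (eapply Rle_trans; [apply Rabs_pos | apply (HK 0)]).
  assert (HB0 : 0 < B) by (pose proof (Hg 0); pose proof (HgB 0); lra).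
  set (eta := eps / ((K + 1) * (B + 1))).
  assert (Heta : eta * ((K + 1) * (B + 1)) = eps) by (unfold eta; field; nra).
  assert (Heta0 : 0 < eta) by (unfold eta; apply Rdiv_lt_0_compat; nra).
  destruct (weierstrass (fun x => / g x) (- M) M ltac:(lra)) with eta as [Q HQ]; auto.
  { intros x _; apply (continuity_pt_inv g x (Hgc x)); pose proof (Hg x); lra. }
  exists Q; intros x; pose proof (Hg x) as Hgx.
  destruct (Rle_dec (Rabs x) M) as [Hin | Hfar].
  - replace (h x - g x * (h x * poly_eval Q x))
      with (h x * g x * (/ g x - poly_eval Q x)) by (field; lra).
    rewrite !Rabs_mult, (Rabs_right (g x)) by lra.
    assert (Rabs (/ g x - poly_eval Q x) <= eta).
    { apply HQ; pose proof (Rle_abs x); pose proof (Rle_abs (- x));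
        rewrite Rabs_Ropp in *; lra. }
    pose proof (HK x); pose proof (HgB x); pose proof (Rabs_pos (h x));
      pose proof (Rabs_pos (/ g x - poly_eval Q x)).
    apply Rle_trans with (K * B * eta); [|nra].
    apply Rmult_le_compat; [nra | lra | apply Rmult_le_compat; lra | lra].
  - rewrite Hout by lra; rewrite Rmult_0_l, Rmult_0_r, Rminus_0_r, Rabs_R0; lra.
Qed.

Theorem mainTheorem7 (f g : R -> R) :
  VRD f ->
  (forall x : R, 0 < g x) ->
  (exists B : R, forall x : R, Rabs (g x) <= B) ->
  continuity g ->
  VRD (fun x => f x * g x).
Proof.
  intros [Hfpos Hf] Hg [B HB] Hgc; split.
  { intros x; apply Rmult_lt_0_compat; auto. }
  intros h Hs Hc eps Heps.
  assert (HgB : forall x, g x <= B) by (intros x; eapply Rle_trans; [apply Rle_abs | apply HB]).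
  assert (HB0 : 0 < B) by (pose proof (Hg 0); pose proof (HgB 0); lra).
  destruct (inverse_weight_approx g h B Hg HgB Hgc (smooth_continuous h Hs) Hc (eps / 2))
    as [Q HQ]; [lra|].
  destruct (Hf (fun x => h x * poly_eval Q x) (smooth_mul_poly h Q Hs)
              (compact_support_mul_poly h Q Hc) (eps / (2 * B))) as [P HP].
  { apply Rdiv_lt_0_compat; lra. }
  exists P; intros x.
  replace (h x - f x * g x * poly_eval P x)
    with ((h x - g x * (h x * poly_eval Q x))
          + g x * (h x * poly_eval Q x - f x * poly_eval P x)) by ring.
  eapply Rle_trans; [apply Rabs_triang|].
  assert (Rabs (g x * (h x * poly_eval Q x - f x * poly_eval P x)) <= eps / 2).
  { rewrite Rabs_mult, Rabs_right by (left; apply Hg).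
    apply Rle_trans with (B * (eps / (2 * B))); [|right; field; lra].
    apply Rmult_le_compat; [left; apply Hg | apply Rabs_pos | apply HgB | apply HP]. }
  pose proof (HQ x); lra.
Qed.
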